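(* Let $G$ be a good finite group and let $N$ be a normal subgroup of $G$ of index $2$. Then the cyclic subgroups $\langle x\rangle$, where $x$ ranges over the $2$-elements of $G$ lying in $G\setminus N$, are not all conjugate in $G$; that is, there exist $2$-elements $x,y\in G\setminus N$ such that $\langle x\rangle$ and $\langle y\rangle$ are not conjugate in $G$.
   Context: A finite group is called good if its Sylow-2 subgroup is trivial or noncyclic. A $2$-element of $G$ is an element whose order is a power of $2$. *)

From mathcomp Require Import all_boot all_fingroup all_solvable.
Set Implicit Arguments. Unset Strict Implicit. Unset Printing Implicit Defensive.
Open Scope group_scope.

Definition good (gT : finGroupType) (G : {group gT}) : Prop :=
  forall S : {group gT}, S \in 'Syl_2(G) -> S :=: 1 \/ ~~ cyclic S.

From mathcomp Require Import all_boot all_fingroup all_solvable.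
From Stdlib Require Import Classical.

Set Implicit Arguments.
Unset Strict Implicit.
Unset Printing Implicit Defensive.
Open Scope group_scope.

(* Suppose all the cyclic subgroups <y>, for y a 2-element of G outside N,
   are conjugate to X = <x>.  Then the conjugates of X \ N partition the set D
   of 2-elements of G outside N, so |D| = |G : N_G(X \ N)| |X| / 2.  By
   Frobenius' theorem |N|_2 divides |D|, which is the number of solutions of
   y ^ |G|_2 = 1 in G minus that of y ^ |N|_2 = 1 in N; as |G|_2 = 2 |N|_2,
   this gives that |N_G(X)|_2 divides |X|.  So a Sylow 2-subgroup S containing
   X satisfies N_S(X) = X, whence S = X by nilpotency: G has a nontrivial
   cyclic Sylow 2-subgroup, contradicting goodness. *)

Lemma pelt_Ldiv_part (gT : finGroupType) (pi : nat_pred) (H : {group gT}) y :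
  y \in H -> (y ^+ #|H|`_pi == 1) = pi.-elt y.
Proof.
move=> Hy; apply/idP/idP=> [/eqP yn1 | piy].
  by apply: pnat_dvd (part_pnat pi #|H|); rewrite order_dvdn yn1.
by rewrite -order_dvdn -(part_pnat_id piy) partn_dvd ?order_dvdG.
Qed.

Lemma card_pelt_setD_dvd (gT : finGroupType) (pi : nat_pred) (G N : {group gT}) :
  N \subset G -> #|N|`_pi %| #|[set y in G :\: N | pi.-elt y]|.
Proof.
move=> sNG; pose L := 'Ldiv_(#|G|`_pi)(G).
have LN : L :&: N = 'Ldiv_(#|N|`_pi)(N).
  apply/setP=> y; rewrite !inE; case Ny: (y \in N); last by rewrite andbF.
  by rewrite (subsetP sNG) //= andbT !pelt_Ldiv_part ?(subsetP sNG).
have LD : L :\: N = [set y in G :\: N | pi.-elt y].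
  apply/setP=> y; rewrite !inE; case Gy: (y \in G); last by rewrite !andbF.
  by rewrite andbT pelt_Ldiv_part.
have dvdN_G : #|N|`_pi %| #|G|`_pi by rewrite partn_dvd ?cardSg.
have dvdL : #|N|`_pi %| #|L| := dvdn_trans dvdN_G (Frobenius_Ldiv (dvdn_part _ _)).
have dvdLN : #|N|`_pi %| #|L :&: N| by rewrite LN Frobenius_Ldiv ?dvdn_part.
by rewrite -LD -(dvdn_addr _ dvdLN) cardsID.
Qed.

Lemma setD_index2_rcoset (gT : finGroupType) (G N X : {group gT}) x :
  N \subset G -> #|G : N| = 2 -> X \subset G -> x \in X :\: N ->
  X :\: N = (X :&: N) :* x.
Proof.
move=> sNG iGN sXG /setDP[Xx notNx].
have GNx : x \in G :\: N by rewrite inE notNx (subsetP sXG).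
apply/setP=> w; rewrite mem_rcoset inE [in RHS]inE groupMr ?groupV // andbC.
case Xw: (w \in X) => //=.
by rewrite -mem_rcoset (rcoset_index2 sNG iGN GNx) inE (subsetP sXG) ?andbT.
Qed.

Lemma card_index2_setD (gT : finGroupType) (G N X : {group gT}) x :
  N \subset G -> #|G : N| = 2 -> X \subset G -> x \in X :\: N ->
  #|X| = (#|X :\: N| * 2)%N.
Proof.
move=> sNG iGN sXG XNx.
rewrite -(cardsID N X) (setD_index2_rcoset sNG iGN sXG XNx) card_rcoset.
by rewrite addnn muln2.
Qed.

Section ConjugateCyclicSubgroups.

Variables (gT : finGroupType) (G N : {group gT}).
Hypotheses (nsNG : N <| G) (iGN : #|G : N| = 2).

Let D := [set y in G :\: N | 2.-elt y].

Hypothesis conjD :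
  {in D &, forall x y, exists2 g, g \in G & <[x]> :^ g = <[y]>}.

Variable x : gT.
Hypothesis Dx : x \in D.

Let X := <[x]>%G.
Let A := X :\: N.

Let sNG : N \subset G := normal_sub nsNG.
Let Gx : x \in G. Proof. by case/setIdP: Dx => /setDP[]. Qed.
Let notNx : x \notin N. Proof. by case/setIdP: Dx => /setDP[]. Qed.
Let sXG : X \subset G. Proof. by rewrite cycle_subG Gx. Qed.
Let Ax : x \in A. Proof. by rewrite inE notNx cycle_id. Qed.
Let pX : 2.-group X. Proof. by case/setIdP: Dx. Qed.

Lemma conj_cycle_setD g : g \in G -> A :^ g = X :^ g :\: N.
Proof. by move=> Gg; rewrite conjDg (normsP (normal_norm nsNG)). Qed.

Lemma conj_cycle_setD_sub g : g \in G -> A :^ g \subset D.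
Proof.
move=> Gg; rewrite conj_cycle_setD //; apply/subsetP=> w /setDP[Xg_w notNw].
have sXgG : X :^ g \subset G by rewrite -(conjGid Gg) conjSg.
rewrite !inE notNw (subsetP sXgG) //=.
by apply: mem_p_elt Xg_w; rewrite pgroupJ.
Qed.

Lemma cycle_conj_cycle_setD g w : g \in G -> w \in A :^ g -> <[w]> = X :^ g.
Proof.
move=> Gg Aw; have [h _ Xh] := conjD Dx (subsetP (conj_cycle_setD_sub Gg) w Aw).
move: Aw; rewrite conj_cycle_setD // => /setDP[Xg_w _].
apply/eqP; rewrite eqEcard cycle_subG Xg_w -Xh /=.
by rewrite !cardJg.
Qed.

Lemma partition_conj_cycle_setD : partition (A :^: G) D.
Proof.
apply/and3P; split.
- rewrite eqEsubset; apply/andP; split.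
    by apply/bigcupsP=> _ /imsetP[g Gg ->]; apply: conj_cycle_setD_sub.
  apply/subsetP=> w Dw; have [g Gg Xg] := conjD Dx Dw.
  apply/bigcupP; exists (A :^ g); first exact: imset_f.
  rewrite conj_cycle_setD // inE Xg cycle_id andbT.
  by case/setIdP: Dw => /setDP[].
- apply/trivIsetP=> _ _ /imsetP[g Gg ->] /imsetP[h Gh ->].
  apply: contraR; rewrite -setI_eq0 => /set0Pn[w /setIP[Ag_w Ah_w]].
  by rewrite !conj_cycle_setD // -(cycle_conj_cycle_setD Gg Ag_w)
    -(cycle_conj_cycle_setD Gh Ah_w).
- apply/imsetP=> [[g Gg A0]].
  by have := memJ_conjg A g x; rewrite Ax -A0 inE.
Qed.

Lemma card_pelt_setD : #|D| = (#|G : 'N_G(A)| * #|A|)%N.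
Proof.
rewrite -card_conjugates.
by apply: card_uniform_partition partition_conj_cycle_setD => _ /imsetP[g _ ->];
  rewrite cardJg.
Qed.

Lemma part2_norm_cycle_dvd : #|'N_G(X)|`_2 %| #|X|.
Proof.
set M := 'N_G(X); have sMG : M \subset G := subsetIl _ _.
have cardX : #|X| = (#|A| * 2)%N := card_index2_setD sNG iGN sXG Ax.
have part2G : (#|G|`_2)%N = (#|N|`_2 * 2)%N.
  by rewrite -(Lagrange sNG) iGN partnM // (part_pnat_id (pnat_id _)).
have sM_NA : M \subset 'N_G(A).
  apply/subsetP=> g /setIP[Gg /normP nXg]; rewrite inE Gg /=.
  by apply/normP; rewrite conj_cycle_setD // nXg.
have dvdG : #|G|`_2 %| (#|G : M| * #|X|)%N.
  rewrite part2G cardX mulnA dvdn_pmul2r //.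
  apply: dvdn_trans (card_pelt_setD_dvd 2 sNG) _.
  by rewrite card_pelt_setD dvdn_pmul2r ?indexgS //; apply/card_gt0P; exists x.
have := partn_dvd 2 (_ : 0 < (#|G : M| * #|X|)%N) dvdG.
rewrite muln_gt0 indexg_gt0 cardG_gt0 => /(_ isT).
rewrite (part_pnat_id (part_pnat _ _)) partnM // (part_pnat_id pX).
by rewrite -(Lagrange sMG) partnM // mulnC dvdn_pmul2l // part_gt0.
Qed.

Lemma cycle_Sylow : 2.-Sylow(G) X.
Proof.
have [S sylS sXS] := Sylow_superset sXG pX; have [sSG pS _] := and3P sylS.
have sX_NSX : X \subset 'N_S(X) by rewrite subsetI sXS normG.
have le_NSX : #|'N_S(X)| <= #|X|.
  apply: dvdn_leq => //; apply: dvdn_trans part2_norm_cycle_dvd.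
  rewrite -(part_pnat_id (pgroupS (subsetIl _ _) pS)).
  by rewrite partn_dvd ?cardSg ?setSI.
have /eqP NSX : X :==: 'N_S(X) by rewrite eqEcard sX_NSX le_NSX.
by rewrite -(nilpotent_sub_norm (pgroup_nil pS) sXS) // -NSX.
Qed.

End ConjugateCyclicSubgroups.

Theorem lemma2p7 (gT : finGroupType) (G N : {group gT}) :
  good G -> N <| G -> #|G : N| = 2%N ->
  exists x y : gT,
    [/\ x \in G :\: N, y \in G :\: N, 2.-elt x, 2.-elt y &
        ~ (exists2 g, g \in G & <[x]> :^ g = <[y]>)].
Proof.
move=> goodG nsNG iGN; apply: NNPP => noPair.
have conjD : {in [set y in G :\: N | 2.-elt y] &, forall x y,
    exists2 g, g \in G & <[x]> :^ g = <[y]>}.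
  move=> x y /setIdP[GNx px] /setIdP[GNy py]; apply: NNPP => not_conj.
  by apply: noPair; exists x, y.
have [S sylS] := Sylow_exists 2 G; have [sSG _ _] := and3P sylS.
have [x Sx notNx] : exists2 x, x \in S & x \notin N.
  apply/subsetPn/negP => sSN; case/and3P: sylS => _ _.
  by rewrite -(Lagrange_index (normal_sub nsNG) sSN) iGN p'natE // dvdn_mulr.
have Dx : x \in [set y in G :\: N | 2.-elt y].
  by rewrite !inE notNx (subsetP sSG) //= (mem_p_elt (pHall_pgroup sylS)).
have : <[x]>%G \in 'Syl_2(G) by rewrite inE (cycle_Sylow nsNG iGN conjD Dx).
case/goodG=> [/eqP | ]; last by rewrite cycle_cyclic.
by rewrite cycle_eq1 => /eqP x1; rewrite x1 group1 in notNx.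
Qed.
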